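(* Let $\mathcal H=\mathbb C^2$ with reference basis the eigenbasis $\{|0\rangle,|1\rangle\}$ of $\sigma_z$, and let the Hamiltonian be $H(t)=\varepsilon_0\mathbb I_2+\tfrac{\omega(t)}{2}\sigma_z$ (diagonal in that basis). Let $\Phi$ be a qubit CPTP map that is phase covariant with respect to $\sigma_z$, i.e. $e^{-i\phi\sigma_z}\Phi[\rho]e^{i\phi\sigma_z}=\Phi[e^{-i\phi\sigma_z}\rho e^{i\phi\sigma_z}]$ for all $\phi\in\mathbb R$ and all $\rho$. Then for every initial qubit state $\rho_i$ the coherence fluctuation distance vanishes: $\mathfrak D_c(\rho_i)=0$.
   Context: EPM distribution: for a state $\rho$, $p_{\rm coh}^{l,k}(\rho)=\mathrm{Tr}(\rho\Pi^i_l)\,\mathrm{Tr}(\Phi[\rho]\Pi^f_k)$, where $\Pi^i_l$ and $\Pi^f_k$ are the projectors onto the energy eigenbasis (here $|0\rangle\langle0|,|1\rangle\langle1|$) at the initial and final times. Coherence fluctuation distance: $\mathfrak D_c(\rho_i)=\min_{\rho^{\mathcal I}\in\mathscr I}D_{KL}\big(p_{\rm coh}(\rho_i)\,\|\,p_{\rm coh}(\rho^{\mathcal I})\big)$, where $\mathscr I$ is the set of states diagonal in the eigenbasis of the initial Hamiltonian and $D_{KL}(p\|q)=\sum_x p_x\ln(p_x/q_x)$. *)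

From HB Require Import structures.
From mathcomp Require Import all_boot all_order all_algebra.
From mathcomp Require Import all_classical all_reals.
From mathcomp Require Import ereal exp trigo.
From mathcomp.real_closed Require Import complex.

Set Implicit Arguments.
Unset Strict Implicit.
Unset Printing Implicit Defensive.

Import Order.TTheory GRing.Theory Num.Theory.
Local Open Scope ring_scope.

Section Qubit.
Variable R : realType.
Local Notation C := (R[i]).

(* positive semidefiniteness of an operator on C^I (I finite) :
   <v, A v> >= 0 for all vectors v (in C, "0 <= z" means z real and >= 0) *)
Definition psd (I : finType) (A : I -> I -> C) : Prop :=
  forall v : I -> C, 0 <= \sum_(a : I) \sum_(b : I) conjc (v a) * A a b * v b.

Definition is_state (rho : 'M[C]_2) : Prop :=
  psd (fun a b => rho a b) /\ \tr rho = 1.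

(* (id_n (x) Phi)(X) for an operator X on C^n (x) C^2, entries indexed by
   pairs (system index, qubit index) *)
Definition ampliate (n : nat) (Phi : 'M[C]_2 -> 'M[C]_2)
  (X : 'I_n * 'I_2 -> 'I_n * 'I_2 -> C) : 'I_n * 'I_2 -> 'I_n * 'I_2 -> C :=
  fun p q => Phi (\matrix_(i, j) X (p.1, i) (q.1, j)) p.2 q.2.

Definition completely_positive (Phi : 'M[C]_2 -> 'M[C]_2) : Prop :=
  forall (n : nat) (X : 'I_n * 'I_2 -> 'I_n * 'I_2 -> C),
    psd X -> psd (ampliate Phi X).

Definition trace_preserving (Phi : 'M[C]_2 -> 'M[C]_2) : Prop :=
  forall rho : 'M[C]_2, \tr (Phi rho) = \tr rho.

Definition expi (x : R) : C := Complex (cos x) (sin x).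

(* e^{-i phi sigma_z} = diag(e^{-i phi}, e^{i phi}) *)
Definition Uz (phi : R) : 'M[C]_2 :=
  \matrix_(a, b) (if a == b then (if a == ord0 then expi (- phi) else expi phi)
                  else 0).

Definition phase_covariant (Phi : 'M[C]_2 -> 'M[C]_2) : Prop :=
  forall (phi : R) (rho : 'M[C]_2), is_state rho ->
    Uz phi *m Phi rho *m Uz (- phi) = Phi (Uz phi *m rho *m Uz (- phi)).

Definition proj (l : 'I_2) : 'M[C]_2 := delta_mx l l.

(* EPM distribution p_coh^{l,k}(rho) = Tr(rho Pi_l) Tr(Phi[rho] Pi_k)
   (the traces are real for states; we take real parts) *)
Definition pcoh (Phi : 'M[C]_2 -> 'M[C]_2) (rho : 'M[C]_2) (lk : 'I_2 * 'I_2) : R :=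
  complex.Re (\tr (rho *m proj lk.1)) * complex.Re (\tr (Phi rho *m proj lk.2)).

Definition DKL (X : finType) (p q : X -> R) : \bar R :=
  (\sum_(x : X) (if p x == 0%R then 0%E
                 else if q x == 0%R then +oo%E
                 else (p x * ln (p x / q x))%:E))%E.

(* states diagonal in the eigenbasis of the initial Hamiltonian *)
Definition incoherent (rho : 'M[C]_2) : Prop :=
  is_state rho /\ rho ord0 (lift ord0 ord0) = 0 /\ rho (lift ord0 ord0) ord0 = 0.

(* coherence fluctuation distance (min realized as infimum in \bar R) *)
Definition Dc (Phi : 'M[C]_2 -> 'M[C]_2) (rhoi : 'M[C]_2) : \bar R :=
  ereal_inf [set DKL (pcoh Phi rhoi) (pcoh Phi rhoI) | rhoI in incoherent].

End Qubit.

From Pilot Require Import Defs.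
From HB Require Import structures.
From mathcomp Require Import all_boot all_order all_algebra.
From mathcomp Require Import all_classical all_reals.
From mathcomp Require Import ereal exp trigo.
From mathcomp.real_closed Require Import complex.

(* Conjugating by e^{-i (pi/2) sigma_z} flips the sign of the off-diagonal
   entries, so the average of rho and its conjugate is the dephased state
   rho_I (the diagonal part of rho), which is incoherent.  Linearity and phase
   covariance then show that Phi[rho_I] has the same diagonal as Phi[rho],
   i.e. p_coh(rho_I) = p_coh(rho) and the divergence vanishes at rho_I.  As
   every p_coh is a probability distribution, Gibbs' inequality makes all the
   divergences in the infimum nonnegative, so the infimum is 0. *)

Set Implicit Arguments.
Unset Strict Implicit.
Unset Printing Implicit Defensive.

Import Order.TTheory GRing.Theory Num.Theory.
Local Open Scope ring_scope.

Section KullbackLeibler.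
Variable R : realType.

Lemma DKL_self (X : finType) (p : X -> R) : DKL p p = 0%E.
Proof.
rewrite /DKL big1 // => x _.
case: ifP => // /negbT p_neq0.
by rewrite (negbTE p_neq0) divff // ln1 mulr0.
Qed.

Lemma subr_le_mul_ln_div (x y : R) : 0 < x -> 0 < y -> x - y <= x * ln (x / y).
Proof.
move=> x_gt0 y_gt0.
have yx_gt0 : 0 < y / x by rewrite divr_gt0.
have ln_yx : ln (y / x) <= y / x - 1.
  by rewrite -[X in ln X](subrK 1) addrC le_ln1Dx // ltrBrDl subrr.
rewrite -invf_div lnV ?posrE // mulrN lerNr opprB.
have := ler_wpM2l (ltW x_gt0) ln_yx.
by rewrite mulrBr mulr1 mulrCA divff ?gt_eqF // mulr1.
Qed.

Lemma DKL_ge0 (X : finType) (p q : X -> R) :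
  (forall x, 0 <= p x) -> (forall x, 0 <= q x) ->
  \sum_x p x = 1 -> \sum_x q x = 1 -> (0 <= DKL p q)%E.
Proof.
move=> p_ge0 q_ge0 p_sum1 q_sum1.
have -> : 0%E = (\sum_x (p x - q x)%:E)%E.
  by rewrite sumEFin big_split /= sumrN p_sum1 q_sum1 subrr.
rewrite /DKL; apply: lee_sum => x _.
case: ifP => [/eqP -> | /negbT p_neq0]; first by rewrite lee_fin sub0r oppr_le0.
case: ifP => [_ | /negbT q_neq0]; first by rewrite leey.
by rewrite lee_fin subr_le_mul_ln_div // lt0r ?p_neq0 ?q_neq0 ?p_ge0 ?q_ge0.
Qed.

End KullbackLeibler.

Section Positivity.
Variable R : realType.
Local Notation C := R[i].

Lemma psd_diag_ge0 (I : finType) (A : I -> I -> C) a : psd A -> 0 <= A a a.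
Proof.
move=> /(_ (fun x => (x == a)%:R)).
rewrite (bigD1 a) //= [X in _ + X]big1 ?addr0 => [|x x_neq_a]; last first.
  by rewrite big1 // => y _; rewrite (negbTE x_neq_a) conjc0 !mul0r.
rewrite (bigD1 a) //= [X in _ + X]big1 ?addr0 => [|y y_neq_a]; last first.
  by rewrite (negbTE y_neq_a) mulr0.
by rewrite eqxx conjc1 mulr1 mul1r.
Qed.

Lemma big_ord1_pair (V : nmodType) (T : finType) (F : 'I_1 * T -> V) :
  \sum_p F p = \sum_j F (ord0, j).
Proof.
transitivity (\sum_p F (p.1, p.2)); first by apply: eq_bigr => -[].
by rewrite -(pair_bigA _ (fun i j => F (i, j))) big_ord1.
Qed.

(* Ampliation by the one-dimensional system C^1 is Phi itself. *)
Lemma cp_psd (Phi : 'M[C]_2 -> 'M[C]_2) (rho : 'M[C]_2) :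
  completely_positive Phi -> psd (fun a b => rho a b) ->
  psd (fun a b => Phi rho a b).
Proof.
move=> Phi_cp rho_psd.
pose X (p q : 'I_1 * 'I_2) := rho p.2 q.2.
have X_psd : psd X.
  move=> v; rewrite big_ord1_pair; under eq_bigr => j _ do rewrite big_ord1_pair.
  exact: (rho_psd (fun j => v (ord0, j))).
have X_rho : \matrix_(i, j) X (ord0, i) (ord0, j) = rho.
  by apply/matrixP => i j; rewrite mxE.
move=> v; have := Phi_cp 1%N X X_psd (fun p => v p.2).
rewrite /ampliate big_ord1_pair; under eq_bigr => j _ do rewrite big_ord1_pair.
by rewrite /= X_rho.
Qed.

End Positivity.

Section EPMDistribution.
Variable R : realType.
Local Notation C := R[i].
Implicit Types (Phi : 'M[C]_2 -> 'M[C]_2) (rho : 'M[C]_2).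

Lemma mxtrace_mul_proj (A : 'M[C]_2) l : \tr (A *m Defs.proj R l) = A l l.
Proof.
rewrite /mxtrace (bigD1 l) //= big1 => [|i i_neq_l]; last first.
  by rewrite mxE big1 // => j _; rewrite mxE (negbTE i_neq_l) andbF mulr0.
rewrite addr0 mxE (bigD1 l) //= big1 => [|j j_neq_l]; last first.
  by rewrite mxE (negbTE j_neq_l) mulr0.
by rewrite mxE !eqxx mulr1 addr0.
Qed.

Lemma pcohE Phi rho l k :
  pcoh Phi rho (l, k) = complex.Re (rho l l) * complex.Re (Phi rho k k).
Proof. by rewrite /pcoh !mxtrace_mul_proj. Qed.

Lemma sum_Re_diag (A : 'M[C]_2) : \sum_l complex.Re (A l l) = complex.Re (\tr A).
Proof. by rewrite /mxtrace raddf_sum. Qed.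

Lemma Re_ge0 (z : C) : 0 <= z -> 0 <= complex.Re z.
Proof. by rewrite lecE => /andP[]. Qed.

Lemma pcoh_ge0 Phi rho lk :
  completely_positive Phi -> is_state rho -> 0 <= pcoh Phi rho lk.
Proof.
move=> Phi_cp [rho_psd _]; case: lk => l k; rewrite pcohE.
apply: mulr_ge0; apply: Re_ge0; first exact: (psd_diag_ge0 l rho_psd).
exact: (psd_diag_ge0 k (cp_psd Phi_cp rho_psd)).
Qed.

Lemma pcoh_sum1 Phi rho :
  trace_preserving Phi -> is_state rho -> \sum_lk pcoh Phi rho lk = 1.
Proof.
move=> Phi_tp [_ rho_tr1].
rewrite -(pair_bigA _ (fun l k => pcoh Phi rho (l, k))) /=.
under eq_bigr => l _ do under eq_bigr => k _ do rewrite pcohE.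
by rewrite -big_distrlr /= !sum_Re_diag Phi_tp rho_tr1 mulr1.
Qed.

End EPMDistribution.

Section Dephasing.
Variable R : realType.
Local Notation C := R[i].
Implicit Types (rho B : 'M[C]_2).

Definition dephase rho : 'M[C]_2 := \matrix_(a, b) if a == b then rho a b else 0.

Lemma dephase_incoherent rho : is_state rho -> incoherent (dephase rho).
Proof.
move=> [rho_psd rho_tr1]; split; last by rewrite !mxE.
split.
  move=> v; apply: sumr_ge0 => a _.
  rewrite (bigD1 a) //= [X in _ + X]big1 ?addr0 => [|b b_neq_a]; last first.
    by rewrite mxE eq_sym (negbTE b_neq_a) mulr0 mul0r.
  rewrite mxE eqxx mulrAC mulr_ge0 ?psd_diag_ge0 //.
  by rewrite mulrC mulcJ_ge0.
by rewrite -rho_tr1; apply: eq_bigr => a _; rewrite mxE eqxx.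
Qed.

Lemma Uz_conjE (phi psi : R) B a b :
  (Uz phi *m B *m Uz psi) a b = Uz phi a a * B a b * Uz psi b b.
Proof.
rewrite mxE (bigD1 b) //= [X in _ + X]big1 ?addr0 => [|j j_neq_b]; last first.
  by rewrite [Uz _ j b]mxE (negbTE j_neq_b) mulr0.
rewrite mxE (bigD1 a) //= [X in _ + X]big1 ?addr0 // => k k_neq_a.
by rewrite mxE eq_sym (negbTE k_neq_a) mul0r.
Qed.

Lemma Uz_pihalf_conjE B a b :
  (Uz (pi / 2) *m B *m Uz (- (pi / 2))) a b = if a == b then B a b else - B a b.
Proof.
have expi_pihalf : expi (pi / 2) = 'i%C :> C by rewrite /expi cos_pihalf sin_pihalf.
have expiN_pihalf : expi (- (pi / 2)) = - 'i%C :> C.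
  rewrite /expi cosN sinN cos_pihalf sin_pihalf.
  by apply/eqP; rewrite eq_complex /= oppr0 !eqxx.
have sqri : 'i%C * 'i%C = -1 :> C by rewrite -expr2 sqr_i.
rewrite Uz_conjE !mxE !eqxx opprK expi_pihalf expiN_pihalf mulrAC.
by case: a => -[|[|//]] a_lt2; case: b => -[|[|//]] b_lt2 /=;
  rewrite ?(mulNr, mulrN, opprK) sqri ?(mulN1r, opprK).
Qed.

Lemma mulV2_addxx (x : C) : 2^-1 * (x + x) = x.
Proof. by rewrite -mulr2n -[x *+ 2]mulr_natl mulKf ?pnatr_eq0. Qed.

Lemma dephase_avg rho :
  dephase rho = 2^-1 *: (rho + Uz (pi / 2) *m rho *m Uz (- (pi / 2))).
Proof.
apply/matrixP => a b.
rewrite mxE [in RHS]mxE [in RHS]mxE Uz_pihalf_conjE.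
case: ifP => _; last by rewrite subrr mulr0.
by rewrite mulV2_addxx.
Qed.

Lemma covariant_dephase_diag (Phi : {linear 'M[C]_2 -> 'M[C]_2}) rho k :
  phase_covariant Phi -> is_state rho -> Phi (dephase rho) k k = Phi rho k k.
Proof.
move=> Phi_cov rho_state.
rewrite dephase_avg linearZ linearD /= -Phi_cov //.
rewrite mxE [X in _ * X]mxE Uz_pihalf_conjE eqxx.
by rewrite mulV2_addxx.
Qed.

Lemma pcoh_dephase (Phi : {linear 'M[C]_2 -> 'M[C]_2}) rho :
  phase_covariant Phi -> is_state rho -> pcoh Phi (dephase rho) = pcoh Phi rho.
Proof.
move=> Phi_cov rho_state; apply: funext => -[l k].
by rewrite !pcohE covariant_dephase_diag // mxE eqxx.
Qed.

End Dephasing.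

Theorem theorem1 (R : realType) (Phi : {linear 'M[R[i]]_2 -> 'M[R[i]]_2})
  (Hcp : completely_positive Phi) (Htp : trace_preserving Phi)
  (Hcov : phase_covariant Phi) (rhoi : 'M[R[i]]_2) (Hrho : is_state rhoi) :
  Dc Phi rhoi = 0%E.
Proof.
apply/eqP; rewrite eq_le; apply/andP; split.
  rewrite -(DKL_self (pcoh Phi rhoi)) -{2}(pcoh_dephase Hcov Hrho).
  by apply: ereal_inf_lbound; exists (dephase rhoi); first exact: dephase_incoherent.
apply: le_ereal_inf_tmp => _ [rho [rho_state _] <-].
by apply: DKL_ge0 => [lk|lk||]; rewrite ?pcoh_ge0 ?pcoh_sum1.
Qed.
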